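(* Let $n\ge6$ be even, $m\in\mathbb N$, and assume the seeds are i.i.d. uniform on $[n]$. Then for every $k\in\{2,\dots,n/2\}$, $$\mathsf P\bigl(\Xi_{\{1,k\}}(1)\le\Xi_{\{1,k\}}(k)\bigr)\le\exp\Bigl\{m\log\Bigl[1-\tfrac1n\bigl(\sqrt{n+1-k}-\sqrt{k-1}\bigr)^2\Bigr]\Bigr\}.$$
   Context: Candidates $[n]$, $m$ voters; voter $j$ has the clockwise oriented preference list $(s_j,s_j+1,\dots,n,1,\dots,s_j-1)$ with seed $s_j$; the seeds are independent and uniform on $[n]$. In an election among a non-empty $S\subseteq[n]$ each voter votes for the first candidate of $S$ in its list; $\Xi_S(i)$ is the number of votes for $i\in S$. *)

From HB Require Import structures.
From mathcomp Require Import all_boot all_order all_algebra.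
From mathcomp Require Import reals.
From mathcomp Require Import sequences exp.
Set Implicit Arguments. Unset Strict Implicit. Unset Printing Implicit Defensive.
Import Order.TTheory GRing.Theory Num.Theory.

(* Candidates are the natural numbers 1..n.  A seed is an element of 'I_n;
   the seed s : 'I_n stands for the candidate s.+1 in [n]. *)

Definition pref (n s : nat) : seq nat := iota s (n.+1 - s) ++ iota 1 (s.-1).

Definition vote (n : nat) (S : seq nat) (s : 'I_n) : nat :=
  head 0 [seq c <- pref n s.+1 | c \in S].

Definition Xi (n m : nat) (S : seq nat) (seeds : {ffun 'I_m -> 'I_n}) (i : nat) : nat :=
  #|[set j : 'I_m | vote S (seeds j) == i]|.

(* Probability of an event on i.i.d. uniform seeds: uniform measure on
   the n^m seed vectors. *)
Definition Prob (R : realType) (n m : nat) (E : pred {ffun 'I_m -> 'I_n}) : R :=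
  (#|[set w | E w]|%:R / (n ^ m)%:R)%R.
Arguments Prob R n m E : clear implicits.

From HB Require Import structures.
From mathcomp Require Import all_boot all_order all_algebra.
From mathcomp Require Import reals.
From mathcomp Require Import sequences exp.
From mathcomp Require Import zify ring.
Import Order.TTheory GRing.Theory Num.Theory.

(* In the election {1, k} a voter votes for k iff its seed lies in {2, ..., k},
   which has probability a/n with a = k - 1, and for 1 otherwise (b = n + 1 - k).
   Chernoff's exponential tilting with weight l = sqrt(b/a) >= 1 bounds the
   indicator of "1 gets at most as many votes as k" by the product over voters
   of l (vote for k) or 1/l (vote for 1); summed over all seed vectors this
   factorizes as (l a + b / l)^m = (2 sqrt(a b))^m, and
   2 sqrt(a b) / n = 1 - (sqrt b - sqrt a)^2 / n. *)

Lemma head_filter_iota_cat (p : pred nat) (a j l x0 : nat) (t : seq nat) :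
  (j < l)%N -> p (a + j)%N -> {in iota a j, forall c, ~~ p c} ->
  head x0 ([seq c <- iota a l | p c] ++ t) = (a + j)%N.
Proof.
move=> jl paj p_prefix; rewrite -(subnKC (ltnW jl)) iotaD filter_cat.
have -> : [seq c <- iota a j | p c] = [::].
  by apply/eqP/negbNE; rewrite -has_filter; apply/hasPn.
by rewrite -(subnSK jl) /= paj.
Qed.

Lemma vote_pair (n k : nat) (s : 'I_n) : (2 <= k <= n)%N ->
  vote [:: 1%N; k] s = if (0 < s < k)%N then k else 1%N.
Proof.
move=> /andP [k2 kn]; have n_pos : (0 < n)%N := leq_ltn_trans (leq0n s) (ltn_ord s).
rewrite /vote /pref filter_cat.
have [-> /=|s_pos] := posnP s.
  by rewrite (@head_filter_iota_cat _ 1 0) ?inE ?eqxx // subn1.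
case: ltnP => [sk|ks].
  rewrite (@head_filter_iota_cat _ s.+1 (k - s.+1)) ?subnKC ?inE ?eqxx ?orbT //; first lia.
  by move=> c; rewrite mem_iota !inE => c_range; apply/norP; split; apply/eqP; lia.
have -> : [seq c <- iota s.+1 (n.+1 - s.+1) | c \in [:: 1%N; k]] = [::].
  apply/eqP/negbNE; rewrite -has_filter; apply/hasPn => c; rewrite mem_iota !inE.
  by move=> c_range; apply/norP; split; apply/eqP; lia.
by case: (nat_of_ord s) s_pos.
Qed.

Lemma Xi_pair_k (n m k : nat) (w : {ffun 'I_m -> 'I_n}) : (2 <= k <= n)%N ->
  Xi [:: 1%N; k] w k = #|[set j | (0 < w j < k)%N]|.
Proof.
move=> k_range; apply: eq_card => j; rewrite !inE vote_pair //.
by case: ifP; rewrite ?eqxx // ltn_eqF //; case/andP: k_range.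
Qed.

Lemma Xi_pair_1 (n m k : nat) (w : {ffun 'I_m -> 'I_n}) : (2 <= k <= n)%N ->
  Xi [:: 1%N; k] w 1 = #|[set j | ~~ (0 < w j < k)%N]|.
Proof.
move=> k_range; apply: eq_card => j; rewrite !inE vote_pair //.
by case: ifP; rewrite ?eqxx // gtn_eqF //; case/andP: k_range.
Qed.

Lemma card_ord_range (n k : nat) : (k <= n)%N ->
  #|[pred s : 'I_n | 0 < s < k]| = k.-1.
Proof.
move=> kn; rewrite -sum1_card big_mkcond /=.
rewrite -(big_mkord xpredT (fun s => if 0 < s < k then 1 else 0))%N.
rewrite (big_cat_nat (n := k)) //= [X in (_ + X)%N]big1_seq ?addn0; last first.
  by move=> i; rewrite mem_index_iota => /and3P [_ ki _]; rewrite [(i < k)%N]ltnNge ki andbF.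
case: k kn => [|k] _; first by rewrite big_geq.
rewrite big_nat_recl //= add0n (eq_big_nat _ _ (F2 := fun=> 1%N)).
  by rewrite sum_nat_const_nat muln1 subn0.
by move=> i /andP [_ ik]; rewrite ltnS ik.
Qed.

Local Open Scope ring_scope.

Lemma sumr_if (V : nmodType) (T : finType) (q : pred T) (x y : V) :
  \sum_t (if q t then x else y) = x *+ #|q| + y *+ (#|T| - #|q|).
Proof. by rewrite big_if /= !sumr_const -(cardC q) addKn. Qed.

Lemma prod_tilt_ge1 (R : numFieldType) (I : finType) (p : pred I) (l : R) :
  1 <= l -> (#|[predC p]| <= #|p|)%N -> 1 <= \prod_i (if p i then l else l^-1).
Proof.
move=> l_ge1 card_le; have l_neq0 : l != 0 by rewrite gt_eqF // (lt_le_trans ltr01).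
rewrite big_if /= !prodr_const -(subnK card_le) exprD -mulrA exprVn.
by rewrite mulfV ?expf_neq0 // mulr1 exprn_ege1.
Qed.

Lemma card_majority_le (R : numFieldType) (I S : finType) (q : pred S) (l : R) :
  1 <= l ->
  #|[set w : {ffun I -> S} | (#|[set i | ~~ q (w i)]| <= #|[set i | q (w i)]|)%N]|%:R
  <= (\sum_s (if q s then l else l^-1)) ^+ #|I|.
Proof.
move=> l_ge1; set g := fun s => if q s then l else l^-1.
have g_ge0 s : 0 <= g s by rewrite /g; case: ifP; rewrite ?invr_ge0 (le_trans ler01).
have -> : (\sum_s g s) ^+ #|I| = \sum_(w : {ffun I -> S}) \prod_i g (w i).
  by rewrite -(bigA_distr_bigA (fun (i : I) (s : S) => g s)) prodr_const.
rewrite -sum1_card natr_sum big_mkcond; apply: ler_sum => w _.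
rewrite inE; case: ifP => [majority|_]; last exact: prodr_ge0.
by apply: prod_tilt_ge1 => //; move: majority; rewrite !cardsE.
Qed.

Lemma tilt_balance (R : rcfType) (a b : R) : 0 < a -> 0 < b ->
  Num.sqrt b / Num.sqrt a * a + (Num.sqrt b / Num.sqrt a)^-1 * b
  = 2 * Num.sqrt a * Num.sqrt b.
Proof.
move=> a_pos b_pos; have sa_neq0 : Num.sqrt a != 0 by rewrite gt_eqF ?sqrtr_gt0.
have sb_neq0 : Num.sqrt b != 0 by rewrite gt_eqF ?sqrtr_gt0.
have a_sq := sqr_sqrtr (ltW a_pos); have b_sq := sqr_sqrtr (ltW b_pos).
set x := Num.sqrt a in a_sq sa_neq0 *; set y := Num.sqrt b in b_sq sb_neq0 *.
by rewrite -[in X in _ * X + _]a_sq -[in X in _ + _ * X]b_sq; field; apply/andP.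
Qed.

Lemma sum_tilt_ord_range (R : rcfType) (n k : nat) (l : R) : (2 <= k <= n)%N ->
  l = Num.sqrt (n.+1 - k)%:R / Num.sqrt k.-1%:R ->
  \sum_(s < n) (if (0 < s < k)%N then l else l^-1)
  = 2 * Num.sqrt k.-1%:R * Num.sqrt (n.+1 - k)%:R.
Proof.
move=> /andP [k2 kn] ->; rewrite sumr_if card_ord_range //.
rewrite card_ord (_ : n - k.-1 = n.+1 - k)%N; last lia.
by rewrite -[X in X + _]mulr_natr -[X in _ + X]mulr_natr tilt_balance // ltr0n; lia.
Qed.

Lemma one_sub_sqr_sqrtB (R : rcfType) (a b : R) : 0 <= a -> 0 <= b -> a + b != 0 ->
  1 - (a + b)^-1 * (Num.sqrt b - Num.sqrt a) ^+ 2
  = 2 * Num.sqrt a * Num.sqrt b / (a + b).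
Proof.
move=> /sqr_sqrtr a_sq /sqr_sqrtr b_sq.
set x := Num.sqrt a in a_sq *; set y := Num.sqrt b in b_sq *.
by rewrite -a_sq -b_sq => ab_neq0; field.
Qed.

Theorem mainTheorem5 (R : realType) (n m k : nat) :
  (6 <= n)%N -> ~~ odd n -> (2 <= k)%N -> (k <= n./2)%N ->
  Prob R n m (fun w : {ffun 'I_m -> 'I_n} => (Xi [:: 1%N; k] w 1 <= Xi [:: 1%N; k] w k)%N)
  <= expR (m%:R * ln (1 - n%:R^-1 *
        (Num.sqrt (n.+1 - k)%N%:R - Num.sqrt (k.-1)%:R) ^+ 2)).
Proof.
move=> _ _ k2; rewrite geq_half_double => k2_le_n.
have k_range : (2 <= k <= n)%N by apply/andP; split; lia.
set a := k.-1; set b := (n.+1 - k)%N.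
have [a_pos a_le_b ab] : [/\ 0 < a, a <= b & (a + b)%N = n]%N by split; lia.
set l : R := Num.sqrt b%:R / Num.sqrt a%:R.
have l_ge1 : 1 <= l.
  by rewrite ler_pdivlMr ?sqrtr_gt0 ?ltr0n // mul1r ler_sqrt ?ler_nat.
set x : R := 2 * Num.sqrt a%:R * Num.sqrt b%:R.
have x_pos : 0 < x by rewrite !mulr_gt0 ?sqrtr_gt0 ?ltr0n //; lia.
have n_pos : (0 : R) < n%:R by rewrite ltr0n; lia.
have -> : 1 - n%:R^-1 * (Num.sqrt b%:R - Num.sqrt a%:R) ^+ 2 = x / n%:R.
  by rewrite -ab natrD one_sub_sqr_sqrtB ?ler0n // -natrD ab gt_eqF.
rewrite mulr_natl -lnXn ?divr_gt0 // lnK ?posrE ?exprn_gt0 ?divr_gt0 //.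
rewrite /Prob natrX expr_div_n ler_pM2r ?invr_gt0 ?exprn_gt0 //.
have := @card_majority_le R 'I_m _ (fun s : 'I_n => 0 < s < k)%N _ l_ge1.
rewrite card_ord (@sum_tilt_ord_range R n k l k_range erefl); apply: le_trans.
by rewrite ler_nat; apply/eq_leq/eq_card => w; rewrite !inE Xi_pair_1 // Xi_pair_k.
Qed.
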